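(* Let $n\ge1$, let $F$ be a finite field with $q$ elements, and let $M_n(F)$ be the monoid of all $n\times n$ matrices over $F$ under multiplication. If $q=2$, then the minimal degree of a faithful action of $M_n(F)$ by partial mappings is $2^n-1$. Otherwise, writing $q-1=p_1^{m_1}\cdots p_k^{m_k}$ for the prime factorization with distinct primes $p_i$, the minimal degree of a faithful action of $M_n(F)$ by partial mappings is $\frac{q^n-1}{q-1}\cdot\sum_{i=1}^kp_i^{m_i}$.
   Context: The minimal degree of a faithful action by partial mappings of a semigroup $S$ is the least $m$ such that $S$ is isomorphic to a subsemigroup of the monoid $PT_m$ of all partial maps on an $m$-element set (acting on the right). *)

From mathcomp Require Import all_boot all_algebra all_field.
Set Implicit Arguments. Unset Strict Implicit. Unset Printing Implicit Defensive.

Definition pmap (m : nat) := {ffun 'I_m -> option 'I_m}.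

(* Product in PT_m for maps acting on the right: x (f g) = (x f) g. *)
Definition pmap_mul (m : nat) (f g : pmap m) : pmap m :=
  [ffun x => obind g (f x)].

Definition faithful_partial_action_of_degree (S : Type) (mul : S -> S -> S)
    (m : nat) : Prop :=
  exists phi : S -> pmap m,
    injective phi /\ forall a b, phi (mul a b) = pmap_mul (phi a) (phi b).

Definition min_faithful_partial_degree (S : Type) (mul : S -> S -> S)
    (d : nat) : Prop :=
  faithful_partial_action_of_degree mul d /\
  forall m, faithful_partial_action_of_degree mul m -> d <= m.

From Pilot Require Import Defs.
From mathcomp Require Import all_boot all_algebra all_field.
From mathcomp Require Import fingroup perm cyclic zify.

(* Lower bound: let M_n(F) act faithfully by partial maps on m points.  The
   points fixed by the zero matrix are fixed by every matrix.  For a nonzero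
   row w, the rank-one idempotent E_w with row space Fw fixes a set D_w of
   other points, and D_w meets D_w' only when w' is a multiple of w, so every
   point lies in at most q - 1 of these sets.  The matrices a E_w (a <> 0)
   form a copy of the cyclic group F^* acting by permutations on D_w, and for
   every prime p | q - 1 some point of D_w is moved by the elements of order
   p; orbit by orbit, this forces |D_w| to be at least the sum of the
   prime-power parts of q - 1 (at least 1 when q = 2).  Counting the pairs
   (w, x) with x in D_w gives (q^n - 1) d <= (q - 1) m.

   Upper bound: let F^* act faithfully on a set Y of d points (the disjoint
   union, over the primes p | q - 1, of the roots of unity of order the
   p-part of q - 1; a single point when q = 2).  A matrix A sends a pair (v, y)
   of a normalized nonzero row and a point of Y to (v', a y), where
   v A = a v' with v' normalized, and is undefined when v A = 0; this is a
   faithful action on ((q^n - 1)/(q - 1)) d points. *)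

Set Implicit Arguments. Unset Strict Implicit. Unset Printing Implicit Defensive.

Import GRing.Theory.

Definition primary_sum (k : nat) := \sum_(p <- primes k) p ^ logn p k.

Lemma sum_leq_prod_gt1 (s : seq nat) : all (leq 2) s ->
  \sum_(x <- s) x <= \prod_(x <- s) x.
Proof.
(* Strengthened so that the induction step also works after the empty list. *)
suff: all (leq 2) s -> [/\ \sum_(x <- s) x <= \prod_(x <- s) x,
                          0 < \prod_(x <- s) x &
                          (\sum_(x <- s) x == 0) || (1 < \prod_(x <- s) x)].
  by move=> strong /strong [].
elim: s => [|a s IH]; first by rewrite !big_nil.
rewrite /= !big_cons => /andP[a2 /IH [le_sum_prod prod_gt0 /orP[/eqP sum0|prod_gt1]]];
  split; nia.
Qed.

Lemma primary_sum_leq k : 0 < k -> primary_sum k <= k.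
Proof.
move=> k_gt0; rewrite {2}(prod_prime_decomp k_gt0) prime_decompE big_map.
rewrite /primary_sum -!(big_map (fun p => p ^ logn p k) xpredT id).
apply: sum_leq_prod_gt1; apply/allP => _ /mapP[p pk ->].
have p_pr : prime p by move: pk; rewrite mem_primes => /andP[].
by rewrite -(expn0 p) ltn_exp2l ?prime_gt1 ?logn_gt0.
Qed.

Lemma primary_sum_dvdn k c : 0 < k -> c %| k ->
  \sum_(p <- primes k | p \in primes c) p ^ logn p c = primary_sum c.
Proof.
move=> k_gt0 ck; rewrite -big_filter; apply: perm_big.
apply: uniq_perm; rewrite ?filter_uniq ?primes_uniq // => p.
rewrite mem_filter andb_idr // !mem_primes => /and3P[-> _ pc].
by rewrite k_gt0 (dvdn_trans pc ck).
Qed.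

Lemma pfactor_logn_dvdn c k p : 0 < k -> c %| k -> p \in primes k ->
  ~~ (c %| k %/ p) -> p ^ logn p k %| c.
Proof.
move=> k_gt0 ck pk ncp; have p_pr : prime p by move: pk; rewrite mem_primes => /andP[].
have c_gt0 : 0 < c by apply: dvdn_gt0 ck.
have e_gt0 : 0 < logn p k by rewrite logn_gt0.
have [c' c'p cE] := pfactor_coprime p_pr c_gt0.
have [k' k'p kE] := pfactor_coprime p_pr k_gt0.
rewrite pfactor_dvdn // leqNgt; apply: contra ncp => lt_c_k.
have -> : k %/ p = k' * p ^ (logn p k).-1.
  by rewrite {1}kE -(prednK e_gt0) expnS mulnCA mulKn // prime_gt0.
rewrite cE dvdn_mul ?dvdn_exp2l //; last by rewrite -ltnS prednK.
have : c' %| k' * p ^ logn p k by rewrite -kE (dvdn_trans _ ck) // cE dvdn_mulr.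
by rewrite Gauss_dvdl // coprimeXr // coprime_sym.
Qed.

Lemma leq_sum_seq_cond (r : seq nat) (P Q : pred nat) (E1 E2 : nat -> nat) :
  (forall i, i \in r -> P i -> Q i && (E1 i <= E2 i)) ->
  \sum_(i <- r | P i) E1 i <= \sum_(i <- r | Q i) E2 i.
Proof.
move=> PQ; rewrite big_seq_cond [X in _ <= X]big_seq_cond big_mkcond.
rewrite [X in _ <= X]big_mkcond; apply: leq_sum => i _.
case: (boolP (i \in r)) => //= ir.
by case Pi: (P i); [case/andP: (PQ i ir Pi) => -> | case: (Q i)].
Qed.

Lemma leq_sum_cond_split (r : seq nat) (P P1 P2 : pred nat) (E : nat -> nat) :
  (forall i, P i -> P1 i || P2 i) ->
  \sum_(i <- r | P i) E i <= \sum_(i <- r | P1 i) E i + \sum_(i <- r | P2 i) E i.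
Proof.
move=> PP12; rewrite !(big_mkcond _ E) -big_split /=; apply: leq_sum => i _.
by case: ifP => // /PP12; case: (P1 i); case: (P2 i) => //= _; lia.
Qed.

Section PermOrbit.

Variables (T : finType) (s : {perm T}).

Lemma iter_porbit_mod x j : iter j s x = iter (j %% #|porbit s x|) s x.
Proof.
rewrite {1}(divn_eq j #|porbit s x|) addnC iterD; congr (iter _ s _).
by elim: (j %/ _) => [|q IH] //; rewrite mulSn iterD IH iter_porbit.
Qed.

Lemma iter_porbit_idE x j : (iter j s x == x) = (#|porbit s x| %| j).
Proof.
rewrite iter_porbit_mod /dvdn; apply/eqP/eqP => [|->] //.
have c_gt0 : 0 < #|porbit s x| by rewrite lt0n card_porbit_neq0.
have uniq_tr := uniq_traject_porbit s x.
have lt_mod : j %% #|porbit s x| < #|porbit s x| by rewrite ltn_mod.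
move=> jx; apply/eqP.
rewrite -(nth_uniq x _ _ uniq_tr) ?size_traject // !nth_traject //.
by rewrite jx.
Qed.

Lemma porbit_moved_pfactors_leq k x : 0 < k -> iter k s x = x ->
  \sum_(p <- primes k | [exists y in porbit s x, iter (k %/ p) s y != y])
    p ^ logn p k <= #|porbit s x|.
Proof.
move=> k_gt0 /eqP; rewrite iter_porbit_idE => ck.
have c_gt0 : 0 < #|porbit s x| by rewrite lt0n card_porbit_neq0.
apply: leq_trans (primary_sum_leq c_gt0); rewrite -(primary_sum_dvdn k_gt0 ck).
apply: leq_sum_seq_cond => p pk /exists_inP[y yx].
have Eyx : porbit s y = porbit s x by apply/eqP; rewrite eq_porbit_mem.
rewrite iter_porbit_idE Eyx => /(pfactor_logn_dvdn k_gt0 ck pk).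
have p_pr : prime p by move: pk; rewrite mem_primes => /andP[].
have e_gt0 : 0 < logn p k by rewrite logn_gt0.
rewrite pfactor_dvdn // => le_e.
by rewrite -logn_gt0 (leq_trans e_gt0 le_e) leq_pexp2l ?prime_gt0.
Qed.

Lemma moved_pfactors_leq_card k (D : {set T}) : 0 < k ->
    {in D, forall x, s x \in D} -> {in D, forall x, iter k s x = x} ->
  \sum_(p <- primes k | [exists x in D, iter (k %/ p) s x != x]) p ^ logn p k
    <= #|D|.
Proof.
move=> k_gt0; have [N] := ubnP #|D|; elim: N D => // N IH D ltDN sD Dk.
have [->|[x xD]] := set_0Vmem D.
  by rewrite big1 // => p /exists_inP[y]; rewrite inE.
set C := porbit s x.
have CD : C \subset D.
  apply/subsetP => _ /porbitP[i ->]; rewrite permX.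
  by elim: i => [|i IHi] //=; apply: sD.
have sD' : {in D :\: C, forall y, s y \in D :\: C}.
  move=> y /setDP[yD yC]; rewrite inE sD // andbT; apply: contra yC.
  have Esy : porbit s (s y) = porbit s y by have := porbit_perm s 1 y; rewrite expg1.
  by rewrite /C porbit_sym Esy -porbit_sym.
have Dk' : {in D :\: C, forall y, iter k s y = y} by move=> y /setDP[/Dk].
have cardD : #|D| = #|C| + #|D :\: C|.
  by rewrite cardsD (setIidPr CD) subnKC // subset_leq_card.
have ltD'N : #|D :\: C| < N.
  have := card_porbit_neq0 s x; move: ltDN; rewrite cardD -/C; lia.
rewrite cardD; apply: leq_trans (leq_add (porbit_moved_pfactors_leq k_gt0 (Dk x xD))
                                         (IH _ ltD'N sD' Dk')).
apply: leq_sum_cond_split => p /exists_inP[y yD moved].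
by case yC: (y \in C); apply/orP; [left|right]; apply/exists_inP; exists y;
  rewrite // inE yC.
Qed.

End PermOrbit.

Lemma moved_pfactors_leq_card_fun (T : finType) (f : T -> T) k (D : {set T}) :
    0 < k -> {in D, forall x, f x \in D} -> {in D, forall x, iter k f x = x} ->
  \sum_(p <- primes k | [exists x in D, iter (k %/ p) f x != x]) p ^ logn p k
    <= #|D|.
Proof.
move=> k_gt0 fD Dk; pose f' x := if x \in D then f x else x.
have f'_inj : injective f'.
  have f_inj : {in D &, injective f}.
    move=> x y xD yD fxy.
    by rewrite -(Dk x xD) -(Dk y yD) -(prednK k_gt0) !iterSr fxy.
  move=> x y; rewrite /f'.
  case: (boolP (x \in D)) => xD; case: (boolP (y \in D)) => yD //.
  - exact: f_inj.
  - by move=> fxy; move: (fD x xD); rewrite fxy (negbTE yD).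
  - by move=> fyx; move: (fD y yD); rewrite -fyx (negbTE xD).
pose s := perm f'_inj.
have iterD j x : x \in D -> iter j f x \in D.
  by move=> xD; elim: j => [|j IHj] //=; apply: fD.
have iter_s j x : x \in D -> iter j s x = iter j f x.
  by move=> xD; elim: j => [|j IHj] //=; rewrite IHj permE /f' iterD.
rewrite (eq_bigl (fun p => [exists x in D, iter (k %/ p) s x != x])); last first.
  by move=> p; apply: eq_existsb => x; case: (boolP (x \in D)) => // xD; rewrite iter_s.
apply: moved_pfactors_leq_card => // x xD; first by rewrite permE /f' xD fD.
by rewrite iter_s // Dk.
Qed.

Lemma sum_card_exchange (I J : finType) (R : I -> {set J}) :
  \sum_i #|R i| = \sum_j #|[set i | j \in R i]|.
Proof.
under eq_bigr do rewrite -sum1_card.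
by rewrite (exchange_big_dep xpredT) //=; under eq_bigr do rewrite sum1dep_card.
Qed.

Local Open Scope ring_scope.

Section RankOneIdempotent.

Variables (F : fieldType) (n : nat).
Implicit Types (v w : 'rV[F]_n).

Lemma row_free_rV w : w != 0 -> row_free w.
Proof. by move=> w0; rewrite /row_free rank_rV w0. Qed.

Definition rank1_idem w : 'M[F]_n := pinvmx w *m w.

Lemma mulmx_rank1_idem w : w != 0 -> w *m rank1_idem w = w.
Proof. by move=> w0; rewrite mulmxA mulmxVp ?row_free_rV // mul1mx. Qed.

Lemma mulmx_rank1_idemZ w a : w != 0 -> w *m (a *: rank1_idem w) = a *: w.
Proof. by move=> w0; rewrite -scalemxAr mulmx_rank1_idem. Qed.

Lemma rank1_idem_idem w : w != 0 -> rank1_idem w *m rank1_idem w = rank1_idem w.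
Proof. by move=> w0; rewrite {1}/rank1_idem -mulmxA mulmx_rank1_idem. Qed.

Lemma rank1_idemZM w a b : w != 0 ->
  (a *: rank1_idem w) *m (b *: rank1_idem w) = (a * b) *: rank1_idem w.
Proof. by move=> w0; rewrite -scalemxAl -scalemxAr rank1_idem_idem // scalerA. Qed.

Lemma rank1_idem_neq0 w : w != 0 -> rank1_idem w != 0.
Proof.
move=> w0; apply/eqP => E0; move/eqP: (w0); apply.
by rewrite -(mulmx_rank1_idem w0) E0 mulmx0.
Qed.

Lemma exists_mx_kill_row v w : ~~ (w <= v)%MS ->
  exists A : 'M[F]_n, v *m A = 0 /\ w *m A = w.
Proof.
rewrite submxE => wB; exists (cokermx v *m pinvmx (w *m cokermx v) *m w); split.
  by rewrite mulmxA (mulmxA v) mulmx_coker !mul0mx.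
by rewrite mulmxA (mulmxA w) mulmxVp ?row_free_rV // mul1mx.
Qed.

End RankOneIdempotent.

Section FinFieldUnits.

Variable F : finFieldType.

Lemma finField_card_pred_gt0 : (0 < #|F|.-1)%N.
Proof. by rewrite -(cardC1 (0 : F)); apply/card_gt0P; exists 1; apply: oner_neq0. Qed.

Lemma expf_card_pred (a : F) : a != 0 -> a ^+ #|F|.-1 = 1.
Proof.
move=> a0; apply: (mulfI a0); rewrite mulr1 -exprS prednK ?expf_card //.
by apply/card_gt0P; exists 0.
Qed.

Lemma finField_prim_root_exists : exists z : F, #|F|.-1.-primitive_root z.
Proof.
have /hasP[z _ ?] : has #|F|.-1.-primitive_root (enum (predC1 (0 : F))).
  apply: has_prim_root; rewrite ?finField_card_pred_gt0 ?enum_uniq //.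
    by apply/allP => a; rewrite mem_enum unity_rootE => /expf_card_pred ->.
  by rewrite -cardE cardC1.
by exists z.
Qed.

End FinFieldUnits.

Definition unit_action_degree (F : finFieldType) :=
  if #|F| == 2 then 1%N else primary_sum #|F|.-1.

Section LowerBound.

(* Plain [pmap] would be [seq.pmap]. *)
Variables (F : finFieldType) (n m : nat) (phi : 'M[F]_n -> Defs.pmap m).
Hypothesis phi_inj : injective phi.
Hypothesis phiM : forall A B, phi (A *m B) = pmap_mul (phi A) (phi B).

Implicit Types (A B : 'M[F]_n) (w : 'rV[F]_n).

Lemma phiME A B x : phi (A *m B) x = obind (phi B) (phi A x).
Proof. by rewrite phiM ffunE. Qed.

Definition fixed A := [set x | phi A x == Some x].

Lemma fixed0 A x : x \in fixed 0 -> phi A x = Some x.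
Proof. by rewrite inE => /eqP phi0x; have := phiME 0 A x; rewrite mul0mx phi0x. Qed.

Definition idem_support w := fixed (rank1_idem w) :\: fixed 0.

Lemma idem_support0 : idem_support 0 = set0.
Proof. by rewrite /idem_support /rank1_idem mulmx0 setDv. Qed.

Lemma rank1_idem_image_fixed w x y : w != 0 ->
  phi (rank1_idem w) x = Some y -> phi (rank1_idem w) y = Some y.
Proof.
move=> w0 Ex; have := phiME (rank1_idem w) (rank1_idem w) x.
by rewrite rank1_idem_idem // Ex.
Qed.

Lemma idem_support_submx w1 w2 x :
  x \in idem_support w1 -> x \in idem_support w2 -> (w2 <= w1)%MS.
Proof.
rewrite !inE => /andP[x_nfix0 /eqP E1x] /andP[_ /eqP E2x].
apply: contraNT x_nfix0 => /exists_mx_kill_row[A [w1A w2A]].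
have E1A : rank1_idem w1 *m A = 0 by rewrite -mulmxA w1A mulmx0.
have E2A : rank1_idem w2 *m A = rank1_idem w2 by rewrite -mulmxA w2A.
have := phiME (rank1_idem w1) A x; rewrite E1A E1x /= => ->.
by have := phiME (rank1_idem w2) A x; rewrite E2A E2x /= => <-.
Qed.

Lemma idem_support_gt0 w : w != 0 -> (0 < #|idem_support w|)%N.
Proof.
move=> w0; rewrite card_gt0; apply: contraNneq (rank1_idem_neq0 w0) => supp0.
apply/eqP/phi_inj/ffunP => x; have := phiME (rank1_idem w) 0 x.
rewrite mulmx0 => ->; case Ex: (phi _ x) => [y|] //=.
have Ey := rank1_idem_image_fixed w0 Ex.
case: (boolP (y \in fixed 0)) => [/fixed0 -> // | y_nfix0].
suff : y \in idem_support w by rewrite supp0 inE.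
by apply/setDP; rewrite inE Ey.
Qed.

Section PrimitiveRootScalars.

Variables (w : 'rV[F]_n) (z : F).
Hypotheses (w0 : w != 0) (z_prim : #|F|.-1.-primitive_root z).

Let k := #|F|.-1.
Let E := rank1_idem w.
Let g x := odflt x (phi (z *: E) x).

Lemma prim_root_scalar_inv : (z *: E) *m (z ^+ k.-1 *: E) = E.
Proof.
rewrite rank1_idemZM // -exprS prednK ?finField_card_pred_gt0 //.
by rewrite prim_expr_order // scale1r.
Qed.

Lemma prim_root_scalar_step x :
  x \in fixed E -> phi (z *: E) x = Some (g x) /\ g x \in fixed E.
Proof.
rewrite inE => /eqP Ex.
have zE_E : (z *: E) *m E = z *: E.
  by rewrite -[E in _ *m E]scale1r rank1_idemZM // mulr1.
have := phiME (z *: E) E x; rewrite zE_E.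
have := phiME (z *: E) (z ^+ k.-1 *: E) x; rewrite prim_root_scalar_inv Ex /g.
by case: (phi (z *: E) x) => [y|] //= _ Ey; rewrite inE -Ey.
Qed.

Lemma prim_root_scalar_iter j x : x \in fixed E ->
  phi (z ^+ j *: E) x = Some (iter j g x) /\ iter j g x \in fixed E.
Proof.
move=> xE; elim: j => [|j [Ejx jxE]].
  by rewrite expr0 scale1r; split=> //; move: xE; rewrite inE => /eqP.
have [Ejx' jxE'] := prim_root_scalar_step jxE.
by rewrite exprSr -rank1_idemZM // phiME Ejx.
Qed.

Lemma prim_root_scalar_support x :
  x \in idem_support w -> g x \in idem_support w.
Proof.
move=> /setDP[xE x_nfix0]; have [zEx gxE] := prim_root_scalar_step xE.
apply/setDP; split => //; apply: contra x_nfix0 => gx_fix0.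
have := phiME (z *: E) (z ^+ k.-1 *: E) x.
rewrite prim_root_scalar_inv zEx /= (fixed0 _ gx_fix0).
by move: xE; rewrite inE => /eqP -> [{1}->].
Qed.

Lemma prim_root_scalar_order x : x \in idem_support w -> iter k g x = x.
Proof.
move=> /setDP[xE _]; have [] := prim_root_scalar_iter k xE.
by rewrite prim_expr_order // scale1r; move: xE; rewrite inE => /eqP -> [].
Qed.

Lemma prim_root_scalar_moved p : p \in primes k ->
  [exists x in idem_support w, iter (k %/ p) g x != x].
Proof.
move=> pk; have p_pr : prime p by move: pk; rewrite mem_primes => /andP[].
apply: contraT; rewrite negb_exists_in => /forall_inP fixed_all.
set B := z ^+ (k %/ p) *: E.
have BE : B = E.
  apply: phi_inj; apply/ffunP => x.
  have EB : E *m B = B by rewrite -[E in E *m _]scale1r rank1_idemZM // mul1r.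
  rewrite -EB phiME; case Ex: (phi E x) => [y|] //=.
  have yE : y \in fixed E by rewrite inE (rank1_idem_image_fixed w0 Ex).
  case: (boolP (y \in fixed 0)) => [/fixed0 -> // | y_nfix0].
  have [-> _] := prim_root_scalar_iter (k %/ p) yE.
  by rewrite (eqP (negbNE (fixed_all y _))) //; apply/setDP.
have zw : z ^+ (k %/ p) *: w = w.
  by rewrite -(mulmx_rank1_idemZ _ w0) -/E -/B BE mulmx_rank1_idem.
have /eqP : (z ^+ (k %/ p) - 1) *: w = 0 by rewrite scalerBl scale1r zw subrr.
rewrite scaler_eq0 (negbTE w0) orbF subr_eq0 -(prim_order_dvd z_prim) -/k.
have k_gt0 : (0 < k)%N := finField_card_pred_gt0 F.
have p_dvd_k : (p %| k)%N by move: pk; rewrite mem_primes => /and3P[].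
have kp_gt0 : (0 < k %/ p)%N by rewrite divn_gt0 ?prime_gt0 // dvdn_leq.
by move/(dvdn_leq kp_gt0); rewrite leqNgt ltn_Pdiv // prime_gt1.
Qed.

Lemma primary_sum_leq_idem_support : (primary_sum k <= #|idem_support w|)%N.
Proof.
apply: leq_trans (moved_pfactors_leq_card_fun (finField_card_pred_gt0 F)
  prim_root_scalar_support prim_root_scalar_order).
apply: leq_sum_seq_cond => p pk _.
by apply/andP; split; [exact: prim_root_scalar_moved | exact: leqnn].
Qed.

End PrimitiveRootScalars.

Lemma unit_action_degree_leq_idem_support w :
  w != 0 -> (unit_action_degree F <= #|idem_support w|)%N.
Proof.
move=> w0; have [z z_prim] := finField_prim_root_exists F.
rewrite /unit_action_degree; case: ifP => _; first exact: idem_support_gt0.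
exact: primary_sum_leq_idem_support z_prim.
Qed.

Lemma card_idem_supports_leq x :
  (#|[set w | x \in idem_support w]| <= #|F|.-1)%N.
Proof.
have [-> | [w1]] := set_0Vmem [set w | x \in idem_support w]; first by rewrite cards0.
rewrite inE => xS1.
have w1_neq0 : w1 != 0 by apply: contraTneq xS1 => ->; rewrite idem_support0 inE.
apply: (@leq_trans #|[set c *: w1 | c in [set~ 0]]|); last first.
  by rewrite (leq_trans (leq_imset_card _ _)) // cardsC1.
apply/subset_leq_card/subsetP => w2; rewrite inE => xS2.
have /submxP[c w2E] := idem_support_submx xS1 xS2.
have {w2E} w2E : w2 = c 0 0 *: w1 by rewrite w2E {1}(mx11_scalar c) mul_scalar_mx.
apply/imsetP; exists (c 0 0) => //; rewrite in_setC1.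
by apply: contraTneq xS2 => c0; rewrite w2E c0 scale0r idem_support0 inE.
Qed.

Lemma faithful_degree_lower_bound :
  ((#|F| ^ n).-1 * unit_action_degree F <= #|F|.-1 * m)%N.
Proof.
have card_nz : #|predC1 (0 : 'rV[F]_n)| = (#|F| ^ n).-1.
  by rewrite cardC1 card_mx mul1n.
rewrite -card_nz -sum_nat_const.
apply: (@leq_trans (\sum_w #|idem_support w|)).
  rewrite [X in (_ <= X)%N](bigD1 0) //= idem_support0 cards0 add0n.
  by apply: leq_sum => w; apply: unit_action_degree_leq_idem_support.
rewrite (sum_card_exchange idem_support).
apply: (@leq_trans (\sum_(x < m) #|F|.-1)); last by rewrite sum_nat_const card_ord mulnC.
by apply: leq_sum => x _; apply: card_idem_supports_leq.
Qed.

End LowerBound.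

Lemma faithful_partial_action_of_fin (S : Type) (mul : S -> S -> S) (T : finType)
    (act : S -> T -> option T) (d : nat) :
    (forall a b, act a =1 act b -> a = b) ->
    (forall a b t, act (mul a b) t = obind (act b) (act a t)) ->
  (#|T| <= d)%N -> faithful_partial_action_of_degree mul d.
Proof.
move=> act_inj actM le_T_d.
pose code (t : T) : 'I_d := widen_ord le_T_d (enum_rank t).
have code_inj : injective code.
  by move=> t1 t2 /(congr1 val) eq_t12; apply/enum_rank_inj/val_inj.
pose decode (i : 'I_d) : option T := [pick t | code t == i].
have codeK t : decode (code t) = Some t.
  rewrite /decode; case: pickP => [t' /eqP /code_inj -> // | /(_ t)].
  by rewrite eqxx.
exists (fun a => [ffun i => obind (fun t => omap code (act a t)) (decode i)]).
split=> [a b /ffunP eq_ab | a b].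
  apply: act_inj => t; have := eq_ab (code t); rewrite !ffunE codeK /=.
  by case: (act a t) (act b t) => [x|] [y|] //= /Some_inj /code_inj ->.
apply/ffunP => i; rewrite !ffunE; case: (decode i) => [t|] //=.
by rewrite actM; case: (act a t) => [t'|] //=; rewrite ffunE codeK.
Qed.

Section Normalize.

Variables (F : fieldType) (n : nat).
Implicit Types (v w : 'rV[F]_n).

Definition lead_entry w : F :=
  if [pick j | w 0 j != 0] is Some j then w 0 j else 0.

Definition normalize w := (lead_entry w)^-1 *: w.

Definition normalized w := (w != 0) && (lead_entry w == 1).

Lemma lead_entry_eq0 w : (lead_entry w == 0) = (w == 0).
Proof.
rewrite /lead_entry; case: pickP => [j wj | w_eq0].
  by rewrite (negbTE wj); apply/esym/eqP => w0; rewrite w0 mxE eqxx in wj.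
rewrite eqxx; apply/esym/eqP/rowP => j; rewrite mxE.
by apply/eqP; rewrite -[_ == _]negbK w_eq0.
Qed.

Lemma lead_entryZ a w : a != 0 -> lead_entry (a *: w) = a * lead_entry w.
Proof.
move=> a0; rewrite /lead_entry (@eq_pick _ _ [pred j | w 0 j != 0]).
  by case: pickP => [j _|_]; rewrite ?mxE ?mulr0.
by move=> j /=; rewrite mxE mulf_eq0 (negbTE a0).
Qed.

Lemma normalizeK w : lead_entry w *: normalize w = w.
Proof.
have [-> | w0] := eqVneq w 0; first by rewrite /normalize !scaler0.
by rewrite scalerA divff ?scale1r // lead_entry_eq0.
Qed.

Lemma normalizeP w : w != 0 -> normalized (normalize w).
Proof.
move=> w0; have lw0 : lead_entry w != 0 by rewrite lead_entry_eq0.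
rewrite /normalized /normalize scaler_eq0 invr_eq0 (negbTE lw0) w0 /=.
by rewrite lead_entryZ ?invr_eq0 // mulVf.
Qed.

Lemma normalizeZ a w : a != 0 -> normalize (a *: w) = normalize w.
Proof.
move=> a0; have [-> | w0] := eqVneq w 0; first by rewrite scaler0.
have lw0 : lead_entry w != 0 by rewrite lead_entry_eq0.
by rewrite /normalize lead_entryZ // scalerA invfM mulrAC mulVf ?mul1r.
Qed.

Lemma normalized_neq0 w : normalized w -> w != 0.
Proof. by case/andP. Qed.

End Normalize.

Section ProjectiveAction.

Variables (F : finFieldType) (n : nat) (Y : finType) (rho : F -> Y -> Y) (y0 : Y).
Hypothesis rhoM :
  forall a b y, a != 0 -> b != 0 -> rho (a * b) y = rho b (rho a y).
Hypothesis rho1 : forall y, rho 1 y = y.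
Hypothesis rho_faithful : forall a, a != 0 -> (forall y, rho a y = y) -> a = 1.

Local Notation prow := {w : 'rV[F]_n | normalized w}.

Lemma card_normalized_rows : (#|F|.-1 * #|{: prow}| <= (#|F| ^ n).-1)%N.
Proof.
pose f (p : F * prow) : 'rV[F]_n := p.1 *: val p.2.
rewrite -(cardsC1 (0 : F)) -[#|{: prow}|]cardsT -cardsX.
rewrite -(card_in_imset (f := f)); last first.
  move=> [a v] [b v']; rewrite !inE /= !andbT => a0 b0 eq_av.
  have lv := (andP (valP v)).2; have lv' := (andP (valP v')).2.
  have eq_ab : a = b.
    have := congr1 (@lead_entry _ _) eq_av.
    by rewrite !lead_entryZ // (eqP lv) (eqP lv') !mulr1.
  congr (_, _) => //; apply: val_inj; apply: (scalerI a0).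
  by rewrite [in RHS]eq_ab.
have -> : (#|F| ^ n)%N = #|{: 'rV[F]_n}| by rewrite card_mx mul1n.
rewrite -(cardsC1 (0 : 'rV[F]_n)).
apply/subset_leq_card/subsetP => _ /imsetP[[a v] /setXP[a0 _] ->].
rewrite !inE /f scaler_eq0 negb_or normalized_neq0 ?(valP v) // andbT.
by rewrite !inE in a0.
Qed.

Lemma rho_inj a b : a != 0 -> b != 0 -> rho a =1 rho b -> a = b.
Proof.
move=> a0 b0 eq_ab; have bV0 : b^-1 != 0 by rewrite invr_eq0.
apply: (mulIf bV0); rewrite divff //; apply: rho_faithful => [|y].
  by rewrite mulf_neq0.
by rewrite rhoM // eq_ab -rhoM // divff.
Qed.

(* [v] is a normalized representative of a point of the projective space; the
   scalar by which [v A] differs from its representative acts on [Y]. *)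
Definition proj_action (A : 'M[F]_n) (t : prow * Y) : option (prow * Y) :=
  let r := val t.1 *m A in
  omap (fun v => (v, rho (lead_entry r) t.2)) (insub (normalize r)).

Lemma proj_action0 A t : val t.1 *m A = 0 -> proj_action A t = None.
Proof.
move=> r0; rewrite /proj_action r0 /normalize scaler0 insubN //.
by apply: contraT => /negbNE /normalized_neq0; rewrite eqxx.
Qed.

Lemma proj_actionE A t : val t.1 *m A != 0 ->
  exists2 v : prow, val v = normalize (val t.1 *m A) &
    proj_action A t = Some (v, rho (lead_entry (val t.1 *m A)) t.2).
Proof.
move=> r0; rewrite /proj_action; case: insubP => [v _ vE | ]; first by exists v.
by rewrite normalizeP.
Qed.

Lemma proj_actionM A B t :
  proj_action (A *m B) t = obind (proj_action B) (proj_action A t).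
Proof.
have [rA0 | rA0] := eqVneq (val t.1 *m A) 0.
  by rewrite !proj_action0 // mulmxA rA0 mul0mx.
have [v vE ->] := proj_actionE rA0; rewrite /=.
set l := lead_entry (val t.1 *m A).
have l0 : l != 0 by rewrite lead_entry_eq0.
have rAE : val t.1 *m (A *m B) = l *: (val v *m B).
  by rewrite mulmxA -[val t.1 *m A]normalizeK -vE scalemxAl.
have [rB0 | rB0] := eqVneq (val v *m B) 0.
  by rewrite !proj_action0 //= rAE rB0 scaler0.
have [v' v'E ->] := proj_actionE (t := (v, rho l t.2)) rB0.
have rAB0 : val t.1 *m (A *m B) != 0 by rewrite rAE scaler_eq0 negb_or l0.
have [u uE ->] := proj_actionE rAB0.
congr (Some (_, _)); first by apply: val_inj; rewrite uE v'E rAE normalizeZ.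
by rewrite rAE lead_entryZ // rhoM // lead_entry_eq0.
Qed.

Lemma proj_action_row A B (v : prow) :
  (forall y, proj_action A (v, y) = proj_action B (v, y)) ->
  val v *m A = val v *m B.
Proof.
move=> eq_AB.
have [rA0 | rA0] := eqVneq (val v *m A) 0; have [rB0 | rB0] := eqVneq (val v *m B) 0.
- by rewrite rA0 rB0.
- have := eq_AB y0; rewrite proj_action0 //.
  by have [v' _ ->] := proj_actionE (t := (v, y0)) rB0.
- have := eq_AB y0; rewrite (@proj_action0 B) //.
  by have [v' _ ->] := proj_actionE (t := (v, y0)) rA0.
have eq_rows y : normalize (val v *m A) = normalize (val v *m B) /\
    rho (lead_entry (val v *m A)) y = rho (lead_entry (val v *m B)) y.
  have [vA vAE eqA] := proj_actionE (t := (v, y)) rA0.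
  have [vB vBE eqB] := proj_actionE (t := (v, y)) rB0.
  by move: (eq_AB y); rewrite eqA eqB => -[eq_vAB ->]; rewrite -vAE -vBE eq_vAB.
have eq_lead : lead_entry (val v *m A) = lead_entry (val v *m B).
  by apply: rho_inj; rewrite ?lead_entry_eq0 // => y; apply: (proj2 (eq_rows y)).
by rewrite -[LHS]normalizeK -[RHS]normalizeK (proj1 (eq_rows y0)) eq_lead.
Qed.

Lemma proj_action_inj A B : proj_action A =1 proj_action B -> A = B.
Proof.
move=> eq_AB; suff eq_rows (w : 'rV[F]_n) : w *m A = w *m B.
  by apply/row_matrixP => i; rewrite !rowE eq_rows.
have [-> | w0] := eqVneq w 0; first by rewrite !mul0mx.
pose v : prow := exist (fun u => normalized u) _ (normalizeP w0).
have /= eq_vAB := proj_action_row (fun y => eq_AB (v, y)).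
by rewrite -[w]normalizeK -!(scalemxAl (lead_entry w)) eq_vAB.
Qed.

End ProjectiveAction.

Section PrimaryRootAction.

Variable F : finFieldType.

Local Notation k := #|F|.-1.
Local Notation kpart p := (p ^ logn p k)%N.

(* Primes are stored in ['I_#|F|] to get a finite type: those of [k] are
   smaller than [#|F|]. *)
Definition primary_root (pr : 'I_#|F| * F) :=
  (nat_of_ord pr.1 \in primes k) && (pr.2 ^+ kpart pr.1 == 1).

Local Notation root_point := {pr : 'I_#|F| * F | primary_root pr}.

(* [a] acts on the [p]-primary component through the surjection
   [a |-> a ^+ (k %/ kpart p)] of [F^*] onto the [kpart p]-th roots of unity. *)
Definition primary_root_shift (a : F) (pr : 'I_#|F| * F) :=
  (pr.1, pr.2 * a ^+ (k %/ kpart pr.1)).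

Definition primary_root_act (a : F) (y : root_point) : root_point :=
  insubd y (primary_root_shift a (val y)).

Lemma primary_root_shiftP a pr :
  a != 0 -> primary_root pr -> primary_root (primary_root_shift a pr).
Proof.
move=> a0 /andP[pk /eqP x1]; rewrite /primary_root /=; rewrite /= in pk x1.
rewrite pk exprMn x1 mul1r -exprM divnK ?pfactor_dvdnn //.
exact/eqP/expf_card_pred.
Qed.

Lemma primary_root_actE a y :
  a != 0 -> val (primary_root_act a y) = primary_root_shift a (val y).
Proof. by move=> a0; apply/insubdK/primary_root_shiftP/(valP y). Qed.

Lemma primary_root_actM a b y : a != 0 -> b != 0 ->
  primary_root_act (a * b) y = primary_root_act b (primary_root_act a y).
Proof.
move=> a0 b0; apply: val_inj; rewrite !primary_root_actE ?mulf_neq0 //.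
by rewrite /primary_root_shift /= exprMn mulrA.
Qed.

Lemma primary_root_act1 y : primary_root_act 1 y = y.
Proof.
apply: val_inj; rewrite primary_root_actE ?oner_neq0 // /primary_root_shift.
by rewrite expr1n mulr1; case: (val y).
Qed.

Lemma primes_lt_card p : p \in primes k -> (p < #|F|)%N.
Proof.
rewrite mem_primes => /and3P[_ k_gt0 p_dvd_k].
rewrite (leq_ltn_trans (dvdn_leq k_gt0 p_dvd_k)) // ltn_predL.
by apply/card_gt0P; exists 0.
Qed.

Lemma primary_root_one p (pk : p \in primes k) :
  primary_root (Ordinal (primes_lt_card pk), 1).
Proof. by rewrite /primary_root pk expr1n eqxx. Qed.

Definition primary_root_unit p (pk : p \in primes k) : root_point :=
  exist (fun pr => primary_root pr) _ (primary_root_one pk).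

Lemma primary_root_act_faithful a :
  a != 0 -> (forall y, primary_root_act a y = y) -> a = 1.
Proof.
move=> a0 a_triv; have [z z_prim] := finField_prim_root_exists F.
have [j a_eq] := prim_rootP z_prim (expf_card_pred a0).
suff k_dvd_j : (k %| j)%N by rewrite a_eq; apply/eqP; rewrite -(prim_order_dvd z_prim).
apply/dvdn_partP => [|p pk]; first exact: finField_card_pred_gt0.
have p_pr : prime p by move: pk; rewrite mem_primes => /andP[].
have KN : (k %/ kpart p * kpart p = k)%N by rewrite divnK ?pfactor_dvdnn.
have K_gt0 : (0 < k %/ kpart p)%N.
  rewrite divn_gt0 ?expn_gt0 ?prime_gt0 // dvdn_leq ?pfactor_dvdnn //.
  exact: finField_card_pred_gt0.
have := congr1 val (a_triv (primary_root_unit pk)); rewrite primary_root_actE //.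
rewrite /primary_root_shift => -[]; rewrite mul1r a_eq -exprM => /eqP.
by rewrite -(prim_order_dvd z_prim) -{1}KN [(j * _)%N]mulnC dvdn_pmul2l // p_part.
Qed.

Lemma primary_sum_ord :
  primary_sum k = (\sum_(i < #|F| | nat_of_ord i \in primes k) kpart i)%N.
Proof.
rewrite /primary_sum -(big_mkord (fun i => i \in primes k) (fun p => kpart p)).
rewrite -[in RHS]big_filter; apply/perm_big/uniq_perm.
- exact: primes_uniq.
- by rewrite filter_uniq // iota_uniq.
move=> p; rewrite mem_filter mem_index_iota.
by case: (boolP (p \in primes k)) => // pk; rewrite primes_lt_card.
Qed.

Lemma card_primary_roots : (#|{: root_point}| <= primary_sum k)%N.
Proof.
rewrite card_sig -sum1_card primary_sum_ord.
have -> : (\sum_(pr in [pred pr | primary_root pr]) 1 =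
           \sum_(i : 'I_#|F|) \sum_(x : F | primary_root (i, x)) 1)%N.
  by rewrite pair_big_dep; apply: eq_bigl => -[i x].
rewrite [in X in (_ <= X)%N]big_mkcond; apply: leq_sum => i _; rewrite sum1_card.
case: ifP => pk; last by rewrite eq_card0 // => x; rewrite /primary_root pk.
rewrite cardE; apply: max_unity_roots; rewrite ?enum_uniq //.
by apply/allP => x; rewrite mem_enum unity_rootE => /andP[].
Qed.

End PrimaryRootAction.

Lemma finField_card2_unit (F : finFieldType) (a : F) : #|F| = 2 -> a != 0 -> a = 1.
Proof.
move=> q2 a0; apply/eqP; apply: contraT => a_neq1.
have : (#|[set a; 1%R]| <= #|[set~ (0%R : F)]|)%N.
  apply/subset_leq_card/subsetP => x.
  by rewrite !inE => /orP[] /eqP ->; rewrite ?oner_neq0.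
by rewrite cards2 cardsC1 q2 a_neq1.
Qed.

Lemma exists_faithful_unit_action (F : finFieldType) :
  exists (Y : finType) (rho : F -> Y -> Y) (y0 : Y),
    [/\ (#|Y| <= unit_action_degree F)%N,
        forall a b y, a != 0 -> b != 0 -> rho (a * b) y = rho b (rho a y),
        forall y, rho 1 y = y &
        forall a, a != 0 -> (forall y, rho a y = y) -> a = 1].
Proof.
rewrite /unit_action_degree; case: ifP => [/eqP q2 | /negbT q_neq2].
  exists unit, (fun _ y => y), tt; split=> //; first by rewrite card_unit.
  by move=> a a0 _; apply: finField_card2_unit.
have k_gt1 : (1 < #|F|.-1)%N.
  by have := finField_card_pred_gt0 F; move: q_neq2; case: #|F| => [|[|[|q]]].
have pk : pdiv #|F|.-1 \in primes #|F|.-1.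
  by rewrite mem_primes pdiv_prime // pdiv_dvd (ltnW k_gt1).
exists {pr : 'I_#|F| * F | primary_root pr}, (@primary_root_act F).
exists (primary_root_unit pk).
split; [exact: card_primary_roots | exact: primary_root_actM |
       exact: primary_root_act1 | exact: primary_root_act_faithful].
Qed.

Lemma faithful_degree_upper_bound (F : finFieldType) (n : nat) :
  faithful_partial_action_of_degree (@mulmx F n n n)
    ((#|F| ^ n).-1 %/ #|F|.-1 * unit_action_degree F).
Proof.
have [Y [rho [y0 [card_Y rhoM rho1 rho_faithful]]]] := exists_faithful_unit_action F.
apply: (faithful_partial_action_of_fin (act := @proj_action F n Y rho)).
- exact: (proj_action_inj y0 rhoM rho1 rho_faithful).
- by move=> A B t; apply: proj_actionM.
rewrite card_prod leq_mul // leq_divRL ?finField_card_pred_gt0 // mulnC.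
exact: card_normalized_rows.
Qed.

Local Close Scope ring_scope.

Theorem corollary2p14 (F : finFieldType) (n : nat) (hn : 0 < n) :
  min_faithful_partial_degree (@mulmx F n n n)
    (if #|F| == 2 then 2 ^ n - 1
     else (#|F| ^ n - 1) %/ (#|F| - 1) *
          \sum_(p <- primes (#|F| - 1)) p ^ logn p (#|F| - 1)).
Proof.
suff : min_faithful_partial_degree (@mulmx F n n n)
         ((#|F| ^ n).-1 %/ #|F|.-1 * unit_action_degree F).
  by rewrite /unit_action_degree !subn1; case: eqP => [-> | _]; rewrite ?divn1 ?muln1.
split=> [|m [phi [phi_inj phiM]]]; first exact: faithful_degree_upper_bound.
rewrite -(leq_pmul2l (finField_card_pred_gt0 F)) mulnA.
apply: leq_trans (faithful_degree_lower_bound phi_inj phiM).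
by rewrite leq_mul2r mulnC leq_divM orbT.
Qed.
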